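(* Let $F=(\langle a_\alpha,b_\alpha,F_\alpha\rangle)_{\alpha\in A}$ be an ordinal sum of t-norms, $f:[0,1]\to[0,1]$ strictly increasing with $B_A^f\neq\emptyset$, and $\{f_\beta\}_{\beta\in B_A^f}$ the decomposition set of $f$. Let $T(x,y)=f^{(-1)}(F(f(x),f(y)))$ for $x,y\in[0,1]$ and, for $\beta\in B_A^f$, $T^\beta(x,y)=f_\beta^{(-1)}(F^\beta(f_\beta(x),f_\beta(y)))$ for $x,y\in[s_\beta,t_\beta]$. Then for every $\beta\in B_A^f$, $T(x,y)=T^\beta(x,y)$ for all $x,y\in[s_\beta,t_\beta]$ with $(x,y)\neq(s_\beta,s_\beta)$.
   Context: A t-norm is a commutative, associative map $[0,1]^2\to[0,1]$, non-decreasing in each variable, with neutral element $1$. For a non-decreasing $g:[p,q]\to[u,v]$, the pseudo-inverse is $g^{(-1)}(y)=\sup\{x\in[p,q]:g(x)<y\}$ ($y\in[u,v]$), with $\sup\emptyset=p$. Ordinal sum: $A\neq\emptyset$ is totally ordered, $\{(a_\alpha,b_\alpha)\}_{\alpha\in A}$ are pairwise disjoint non-empty open subintervals of $[0,1]$, $F_\alpha$ are t-norms, and $F(x,y)=a_\alpha+(b_\alpha-a_\alpha)F_\alpha\big(\frac{x-a_\alpha}{b_\alpha-a_\alpha},\frac{y-a_\alpha}{b_\alpha-a_\alpha}\big)$ if $(x,y)\in[a_\alpha,b_\alpha]^2$, and $F(x,y)=\min\{x,y\}$ otherwise. For $\alpha\in A$, $F^\alpha:[a_\alpha,b_\alpha]^2\to[a_\alpha,b_\alpha]$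 is $F^\alpha(x,y)=a_\alpha+(b_\alpha-a_\alpha)F_\alpha\big(\frac{x-a_\alpha}{b_\alpha-a_\alpha},\frac{y-a_\alpha}{b_\alpha-a_\alpha}\big)$. For $\alpha\in A$: $s_\alpha=\inf\{x\in[0,1]:f(x)\ge a_\alpha\}$, $t_\alpha=\sup\{x\in[0,1]:f(x)\le b_\alpha\}$ (with $\inf\emptyset=1$, $\sup\emptyset=0$); $B_A^f=\{\beta\in A: s_\beta<t_\beta\}$. The decomposition set consists of the strictly increasing maps $f_\beta:[s_\beta,t_\beta]\to[a_\beta,b_\beta]$ ($\beta\in B_A^f$) given by $f_\beta(x)=f(x)$ for $x\in(s_\beta,t_\beta)$; $f_\beta(s_\beta)=f(s_\beta)$ if $f(s_\beta)\ge a_\beta$ and $f_\beta(s_\beta)=a_\beta$ if $f(s_\beta)<a_\beta$; $f_\beta(t_\beta)=f(t_\beta)$ if $f(t_\beta)\le b_\beta$ and $f_\beta(t_\beta)=b_\beta$ if $f(t_\beta)>b_\beta$. *)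

From HB Require Import structures.
From mathcomp Require Import all_boot all_order all_algebra.
From mathcomp Require Import boolp classical_sets reals.
Set Implicit Arguments. Unset Strict Implicit. Unset Printing Implicit Defensive.
Import Order.TTheory GRing.Theory Num.Theory.
Local Open Scope ring_scope.
Local Open Scope classical_set_scope.

Section Defs.
Variable R : realType.

Definition in01 (x : R) : Prop := 0 <= x <= 1.

(* t-norm: a map [0,1]^2 -> [0,1] (represented as a total function R->R->R,
   only its values on [0,1]^2 matter). *)
Definition is_tnorm (T : R -> R -> R) : Prop :=
  (forall x y, in01 x -> in01 y -> in01 (T x y)) /\
  (forall x y, in01 x -> in01 y -> T x y = T y x) /\
  (forall x y z, in01 x -> in01 y -> in01 z -> T x (T y z) = T (T x y) z) /\
  (forall x x' y, in01 x -> in01 x' -> in01 y -> x <= x' -> T x y <= T x' y) /\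
  (forall x y y', in01 x -> in01 y -> in01 y' -> y <= y' -> T x y <= T x y') /\
  (forall x, in01 x -> T x 1 = x).

Definition sup_d (S : set R) (d : R) : R := if `[< S !=set0 >] then sup S else d.
Definition inf_d (S : set R) (d : R) : R := if `[< S !=set0 >] then inf S else d.

Definition pinv (p q : R) (g : R -> R) (y : R) : R :=
  sup_d [set x | p <= x <= q /\ g x < y] p.

Definition summand (a b : R) (G : R -> R -> R) (x y : R) : R :=
  a + (b - a) * G ((x - a) / (b - a)) ((y - a) / (b - a)).

Definition is_ordinal_sum (A : Type) (a b : A -> R) (Fs : A -> R -> R -> R)
  (F : R -> R -> R) : Prop :=
  inhabited A /\
  (forall al, 0 <= a al /\ a al < b al /\ b al <= 1) /\
  (forall al be, al <> be ->
     forall z, ~ (a al < z < b al /\ a be < z < b be)) /\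
  (forall al, is_tnorm (Fs al)) /\
  (forall x y, in01 x -> in01 y ->
     (forall al, a al <= x <= b al -> a al <= y <= b al ->
        F x y = summand (a al) (b al) (Fs al) x y) /\
     ((forall al, ~ (a al <= x <= b al /\ a al <= y <= b al)) ->
        F x y = Order.min x y)).

Definition strictly_incr01 (f : R -> R) : Prop :=
  (forall x, in01 x -> in01 (f x)) /\
  (forall x y, in01 x -> in01 y -> x < y -> f x < f y).

Definition s_of (f : R -> R) (a : R) : R :=
  inf_d [set x | in01 x /\ a <= f x] 1.
Definition t_of (f : R -> R) (b : R) : R :=
  sup_d [set x | in01 x /\ f x <= b] 0.

Definition f_dec (f : R -> R) (a b : R) (x : R) : R :=
  let s := s_of f a in let t := t_of f b in
  if `[< x = s >] then (if a <= f s then f s else a)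
  else if `[< x = t >] then (if f t <= b then f t else b)
  else f x.

End Defs.

From HB Require Import structures.
From mathcomp Require Import all_boot all_order all_algebra.
From mathcomp Require Import boolp classical_sets reals.
From mathcomp Require Import lra.
Set Implicit Arguments. Unset Strict Implicit.
Import Order.TTheory GRing.Theory Num.Theory.
Local Open Scope ring_scope.

(* On [s_b, t_b] the map f_b is f clamped to [a_b, b_b] (f_decE): f sends (s_b, t_b)
   into (a_b, b_b) and the rest of [0,1] outside [a_b, b_b].  Hence for a level z in
   [a_b, b_b] the sets {x | f x < z} and {x in [s_b, t_b] | f_b x < z} have the same
   supremum, i.e. f^(-1) and f_b^(-1) agree on [a_b, b_b].  For x <= y it remains to
   compare F (f x) (f y) with F^b (f_b x) (f_b y): if both values lie in [a_b, b_b]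
   they coincide; if f x < a_b then x = s_b, while y > s_b puts f y above a_b, so
   F is the minimum f x and F^b (a_b, _) = a_b, both sides giving s_b; if f y > b_b
   then y = t_b, F is the minimum f x (or lies in [b_b, f t_b] when x = t_b too) and
   F^b (_, b_b) is the identity. *)

Section Pseudoinverse.
Variable R : realType.
Implicit Types (S : set R) (c d z : R) (g : R -> R).

Lemma sup_dE S d c : (forall x, S x -> x <= c) ->
  (forall e, e < c -> exists2 x, S x & e < x) -> sup_d S d = c.
Proof.
move=> ubc approx; have [x0 Sx0 _] := approx (c - 1) ltac:(lra).
rewrite /sup_d asboolT; last by exists x0.
apply/eqP; rewrite eq_le; apply/andP; split; first by apply: ge_sup; [exists x0|].
rewrite leNgt; apply/negP => /approx [x Sx lt_sup_x].
have : x <= sup S by apply: ub_le_sup => //; exists c.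
by rewrite leNgt lt_sup_x.
Qed.

Lemma sup_d_const S c : (forall x, S x -> x = c) -> sup_d S c = c.
Proof.
move=> Sc; rewrite /sup_d; case: ifPn => // /asboolP [x Sx].
apply/eqP; rewrite eq_le; apply/andP; split; first by apply: ge_sup; [exists x|move=> y /Sc ->].
by rewrite -{1}(Sc x Sx); apply: ub_le_sup => //; exists c => y /Sc ->.
Qed.

Lemma sup_d_le_above S1 S2 d1 d2 w : S1 w -> S2 w -> has_ubound S2 ->
  (forall x, w < x -> S1 x -> S2 x) -> sup_d S1 d1 <= sup_d S2 d2.
Proof.
move=> S1w S2w ubS2 sub; rewrite /sup_d !asboolT; try by exists w.
apply: ge_sup; first by exists w.
move=> x S1x; case: (lerP x w) => [le_xw|lt_wx]; last exact/ub_le_sup/sub.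
exact: le_trans le_xw (ub_le_sup ubS2 S2w).
Qed.

Lemma pinv_eq p q g z c : p <= c <= q ->
  (forall x, p <= x <= q -> g x < z -> x <= c) ->
  (forall x, p <= x < c -> g x < z) -> pinv p q g z = c.
Proof.
move=> /andP[le_pc le_cq] below_c up_to_c; rewrite /pinv.
have [lt_pc|le_cp] := ltrP p c.
  apply: sup_dE => [x [? ?]|e lt_ec]; first exact: below_c.
  pose M := Num.max e p; pose m := (M + c) / 2.
  have [le_eM le_pM lt_Mc] : [/\ e <= M, p <= M & M < c].
    by rewrite !le_max gt_max !lexx ?orbT lt_ec lt_pc.
  exists m; rewrite /m; last lra.
  by split; [|apply: up_to_c]; apply/andP; split; lra.
have eq_pc : p = c by apply/eqP; rewrite eq_le le_cp le_pc.
rewrite -eq_pc; apply: sup_d_const => x [/andP[le_px le_xq] gxz].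
apply/eqP; rewrite eq_le le_px andbT eq_pc; apply: below_c gxz.
by rewrite le_px.
Qed.

End Pseudoinverse.

Section Tnorm.
Variables (R : realType) (G : R -> R -> R).
Hypothesis tnG : is_tnorm G.

Lemma tnorm_range u v : in01 u -> in01 v -> 0 <= G u v <= 1.
Proof. by case: tnG => in01G _; apply: in01G. Qed.

Lemma tnormC u v : in01 u -> in01 v -> G u v = G v u.
Proof. by case: tnG => _ [comm _]; apply: comm. Qed.

Lemma tnormx1 u : in01 u -> G u 1 = u.
Proof. by case: tnG => _ [_ [_ [_ [_ unit]]]]; apply: unit. Qed.

Lemma in01_1 : in01 (1 : R). Proof. by rewrite /in01 ler01 lexx. Qed.
Lemma in01_0 : in01 (0 : R). Proof. by rewrite /in01 ler01 lexx. Qed.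

Lemma tnorm_monor u v v' : in01 u -> in01 v -> in01 v' -> v <= v' -> G u v <= G u v'.
Proof. by case: tnG => _ [_ [_ [_ [mono _]]]]; apply: mono. Qed.

Lemma tnorm0x u : in01 u -> G 0 u = 0.
Proof.
move=> u01; have /andP[ge0 _] := tnorm_range in01_0 u01.
apply/eqP; rewrite eq_le ge0 andbT -[X in _ <= X](tnormx1 in01_0).
by apply: (tnorm_monor in01_0 u01 in01_1); case/andP: u01.
Qed.

Lemma tnorm_diag_le u : in01 u -> G u u <= u.
Proof.
move=> u01; rewrite -[X in _ <= X](tnormx1 u01).
by apply: (tnorm_monor u01 u01 in01_1); case/andP: u01.
Qed.

End Tnorm.

Section Summand.
Variables (R : realType) (a b : R) (G : R -> R -> R).
Hypotheses (tnG : is_tnorm G) (lt_ab : a < b).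
Implicit Types u v : R.

Lemma rescale_in01 u : a <= u <= b -> in01 ((u - a) / (b - a)).
Proof.
move=> /andP[le_au le_ub]; apply/andP; split; first by apply: divr_ge0; lra.
by rewrite ler_pdivrMr ?mul1r ?subr_gt0 //; lra.
Qed.

Lemma rescaleK u : a + (b - a) * ((u - a) / (b - a)) = u.
Proof. by rewrite mulrC divfK ?subr_eq0 ?gt_eqF // addrC subrK. Qed.

Lemma summand_range u v : a <= u <= b -> a <= v <= b -> a <= summand a b G u v <= b.
Proof.
move=> uab vab; have /andP[ge0 le1] := tnorm_range tnG (rescale_in01 uab) (rescale_in01 vab).
rewrite /summand; set g := G _ _ in ge0 le1 *.
apply/andP; split; nra.
Qed.

Lemma summandC u v : a <= u <= b -> a <= v <= b -> summand a b G u v = summand a b G v u.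
Proof. by move=> uab vab; rewrite /summand (tnormC tnG (rescale_in01 uab) (rescale_in01 vab)). Qed.

Lemma summand_bot_l v : a <= v <= b -> summand a b G a v = a.
Proof. by move=> vab; rewrite /summand subrr mul0r (tnorm0x tnG (rescale_in01 vab)) mulr0 addr0. Qed.

Lemma summand_top_r u : a <= u <= b -> summand a b G u b = u.
Proof.
move=> uab; rewrite /summand divff ?subr_eq0 ?gt_eqF //.
by rewrite (tnormx1 tnG (rescale_in01 uab)) rescaleK.
Qed.

Lemma summand_diag u : a <= u <= b -> a <= summand a b G u u <= u.
Proof.
move=> uab; have w01 := rescale_in01 uab.
have le_w := tnorm_diag_le tnG w01; have /andP[ge0 _] := tnorm_range tnG w01 w01.
have uE := rescaleK u; rewrite /summand; set w := (u - a) / (b - a) in le_w ge0 uE *.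
apply/andP; split; nra.
Qed.

End Summand.

Section Levels.
Variables (R : realType) (f : R -> R).
Hypothesis incr_f : strictly_incr01 f.
Implicit Types c u z : R.

Lemma strictly_incr01_le u v : in01 u -> in01 v -> u <= v -> f u <= f v.
Proof.
move=> u01 v01; rewrite le_eqVlt => /orP[/eqP->//|lt_uv].
exact/ltW/(incr_f.2 u v u01 v01).
Qed.

Lemma s_of_ge0 c : 0 <= s_of f c.
Proof.
rewrite /s_of /inf_d; case: ifPn => [/asboolP ne|_]; last exact: ler01.
by apply: lb_le_inf => // u [/andP[]].
Qed.

Lemma t_of_le1 c : t_of f c <= 1.
Proof.
rewrite /t_of /sup_d; case: ifPn => [/asboolP ne|_]; last exact: ler01.
by apply: ge_sup => // u [/andP[]].
Qed.

Lemma f_lt_below_s_of c u : in01 u -> u < s_of f c -> f u < c.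
Proof.
move=> u01; rewrite ltNge [f u < c]ltNge; apply: contra => le_cfu.
rewrite /s_of /inf_d asboolT; last by exists u.
by apply: ge_inf => //; exists 0 => x [/andP[]].
Qed.

Lemma f_gt_above_s_of c u : in01 u -> s_of f c < u -> c < f u.
Proof.
move=> u01; rewrite /s_of /inf_d; case: ifPn => [/asboolP ne|_]; last first.
  by case/andP: u01 => _ le_u1 lt_1u; have := lt_le_trans lt_1u le_u1; rewrite ltxx.
move=> /(inf_lt ne) [x [x01 le_cfx] lt_xu].
exact: le_lt_trans le_cfx (incr_f.2 x u x01 u01 lt_xu).
Qed.

Lemma f_gt_above_t_of c u : in01 u -> t_of f c < u -> c < f u.
Proof.
move=> u01; rewrite ltNge [c < f u]ltNge; apply: contra => le_fuc.
rewrite /t_of /sup_d asboolT; last by exists u.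
by apply: ub_le_sup => //; exists 1 => x [/andP[]].
Qed.

Lemma f_lt_below_t_of c u : in01 u -> u < t_of f c -> f u < c.
Proof.
move=> u01; rewrite /t_of /sup_d; case: ifPn => [/asboolP ne|_]; last first.
  by case/andP: u01 => le_0u _ lt_u0; have := le_lt_trans le_0u lt_u0; rewrite ltxx.
move=> /(sup_gt ne) [x [x01 le_fxc] lt_ux].
exact: lt_le_trans (incr_f.2 u x u01 x01 lt_ux) le_fxc.
Qed.

Lemma le_t_of c u : in01 u -> f u <= c -> u <= t_of f c.
Proof. by move=> u01 le_fuc; rewrite leNgt; apply/negP => /(f_gt_above_t_of u01); lra. Qed.

Lemma pinv01_eq z u : in01 u -> z <= f u ->
  (forall x, in01 x -> x < u -> f x < z) -> pinv 0 1 f z = u.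
Proof.
move=> u01 le_zfu below; apply: pinv_eq => [//|x x01 lt_fxz|x /andP[ge0x lt_xu]].
  rewrite leNgt; apply/negP => /(incr_f.2 u x u01 x01); lra.
by apply: below => //; case/andP: u01 => _ le_u1; apply/andP; split; lra.
Qed.

Lemma pinv_f_id u : in01 u -> pinv 0 1 f (f u) = u.
Proof. by move=> u01; apply: (pinv01_eq u01 (lexx _)) => x x01; apply: incr_f.2. Qed.

End Levels.

Section Decomposition.
Variables (R : realType) (f : R -> R) (a b : R).
Hypothesis incr_f : strictly_incr01 f.
Local Notation s := (s_of f a).
Local Notation t := (t_of f b).
Local Notation fd := (f_dec f a b).
Hypothesis lt_st : s < t.

Lemma in01_st u : s <= u <= t -> in01 u.
Proof.
have := s_of_ge0 f a; have := t_of_le1 f b => le_t1 ge0_s /andP[le_su le_ut].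
by apply/andP; split; lra.
Qed.

Let s_st : s <= s <= t. Proof. by rewrite lexx ltW. Qed.
Let t_st : s <= t <= t. Proof. by rewrite lexx ltW. Qed.

Lemma f_interior u : s < u < t -> a < f u < b.
Proof.
move=> /andP[lt_su lt_ut]; have u01 : in01 u by apply: in01_st; rewrite !ltW.
by rewrite (f_gt_above_s_of incr_f u01) ?(f_lt_below_t_of incr_f u01).
Qed.

Let lt_ab : a < b.
Proof.
have /andP[] := f_interior (u := (s + t) / 2) ltac:(have := lt_st => ?; apply/andP; split; lra).
exact: lt_trans.
Qed.

Lemma f_decE u : s <= u <= t -> fd u = Num.max a (Num.min (f u) b).
Proof.
move=> ust; have u01 := in01_st ust; rewrite /f_dec /=.
have lt_fsb := f_lt_below_t_of incr_f (in01_st s_st) lt_st.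
have lt_aft := f_gt_above_s_of incr_f (in01_st t_st) lt_st.
have [->|ne_us] := pselect (u = s).
  rewrite asboolT // (min_l (ltW lt_fsb)).
  by case: (lerP a (f s)).
rewrite asboolF //; have [->|ne_ut] := pselect (u = t).
  rewrite asboolT //; case: (lerP (f t) b) => [_|lt_bft]; first by rewrite max_r // ltW.
  by rewrite max_r // ltW // lt_ab.
have /andP[le_su le_ut] := ust.
have lt_su : s < u by rewrite lt_neqAle le_su andbT eq_sym; apply/eqP.
have lt_ut : u < t by rewrite lt_neqAle le_ut andbT; apply/eqP.
have /andP[lt_afu lt_fub] := f_interior (introT andP (conj lt_su lt_ut)).
by rewrite asboolF // min_l ?max_r // ltW.
Qed.

Lemma f_dec_range u : s <= u <= t -> a <= fd u <= b.
Proof.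
move=> ust; rewrite f_decE // le_max lexx ge_max (ltW lt_ab) ge_min lexx.
by rewrite !orbT.
Qed.

Lemma f_dec_id u : s <= u <= t -> a <= f u <= b -> fd u = f u.
Proof. by move=> ust /andP[le_afu le_fub]; rewrite f_decE // min_l // max_r. Qed.

Lemma f_dec_bot u : s <= u <= t -> f u < a -> fd u = a.
Proof.
move=> ust lt_fua; rewrite f_decE // min_l ?max_l ?ltW //.
exact: lt_trans lt_fua lt_ab.
Qed.

Lemma f_dec_top u : s <= u <= t -> b < f u -> fd u = b.
Proof. by move=> ust lt_bfu; rewrite f_decE // min_r ?max_r ?ltW ?lt_ab. Qed.

Lemma f_dec_lt_top u : s <= u < t -> fd u < b.
Proof.
move=> /andP[le_su lt_ut]; have ust : s <= u <= t by rewrite le_su ltW.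
by rewrite f_decE // gt_max lt_ab gt_min (f_lt_below_t_of incr_f (in01_st ust)).
Qed.

Lemma eq_s_of_f_lt u : s <= u <= t -> f u < a -> u = s.
Proof.
move=> ust lt_fua; apply/eqP; rewrite eq_le (andP ust).1 andbT leNgt; apply/negP.
by move=> /(f_gt_above_s_of incr_f (in01_st ust)); lra.
Qed.

Lemma eq_t_of_f_gt u : s <= u <= t -> b < f u -> u = t.
Proof.
move=> ust lt_bfu; apply/eqP; rewrite eq_le (andP ust).2 leNgt; apply/negP.
by move=> /(f_lt_below_t_of incr_f (in01_st ust)); lra.
Qed.

Lemma f_dec_lt_iff u z : s < u <= t -> z <= b -> (fd u < z) = (f u < z).
Proof.
move=> /andP[lt_su le_ut] le_zb; have ust : s <= u <= t by rewrite le_ut ltW.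
have lt_afu := f_gt_above_s_of incr_f (in01_st ust) lt_su.
have [le_fub|lt_bfu] := lerP (f u) b; first by rewrite f_dec_id // (ltW lt_afu).
by rewrite f_dec_top // !ltNge le_zb (le_trans le_zb (ltW lt_bfu)).
Qed.

Lemma pinv_f_dec_cross z w : a <= z <= b -> s < w <= t -> f w < z ->
  pinv 0 1 f z = pinv s t fd z.
Proof.
move=> /andP[_ le_zb] /andP[lt_sw le_wt] fwz; have wst : s <= w <= t by rewrite le_wt ltW.
have fdwz : fd w < z by rewrite f_dec_lt_iff // lt_sw.
rewrite /pinv; apply/eqP; rewrite eq_le; apply/andP; split.
  apply: (@sup_d_le_above _ _ _ _ _ w) => [|||x lt_wx [x01 fxz]].
  - exact: conj (in01_st wst) fwz.
  - exact: conj wst fdwz.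
  - by exists t => x [/andP[_ ?] _].
  have xst : s < x <= t by rewrite (lt_trans lt_sw) // le_t_of // ltW // (lt_le_trans fxz).
  by split; [case/andP: xst => /ltW -> -> | rewrite f_dec_lt_iff].
apply: (@sup_d_le_above _ _ _ _ _ w) => [|||x lt_wx [xst fdxz]].
- exact: conj wst fdwz.
- exact: conj (in01_st wst) fwz.
- by exists 1 => x [/andP[_ ?] _].
by split; [exact: in01_st | rewrite -f_dec_lt_iff // (lt_trans lt_sw) ?(andP xst).2].
Qed.

Lemma pinv01_eq_s z : a <= z <= b -> (forall x, s < x <= t -> z <= f x) -> pinv 0 1 f z = s.
Proof.
move=> /andP[le_az le_zb] f_ge_z.
apply: pinv_eq => [|x x01 fxz|x /andP[ge0x lt_xs]]; first exact: (in01_st s_st).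
  rewrite leNgt; apply/negP => lt_sx.
  have xst : s < x <= t by rewrite lt_sx le_t_of // ltW // (lt_le_trans fxz).
  by have := f_ge_z x xst; lra.
have x01 : in01 x by have := t_of_le1 f b; have := lt_st; rewrite /in01 ge0x /=; lra.
by have := f_lt_below_s_of x01 lt_xs; lra.
Qed.

Lemma pinv_f_dec_eq_s z : z <= b -> (forall x, s < x <= t -> z <= f x) -> pinv s t fd z = s.
Proof.
move=> le_zb f_ge_z; apply: pinv_eq => [|x xst fdxz|x]; [by rewrite lexx ltW | | lra].
rewrite leNgt; apply/negP => lt_sx; have sxt : s < x <= t by rewrite lt_sx (andP xst).2.
by move: fdxz; rewrite f_dec_lt_iff // ltNge f_ge_z.
Qed.

Lemma pinv_f_dec z : a <= z <= b -> pinv 0 1 f z = pinv s t fd z.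
Proof.
move=> zab; have [[w wst fwz]|none] := pselect (exists2 w, s < w <= t & f w < z).
  exact: pinv_f_dec_cross zab wst fwz.
have f_ge_z x : s < x <= t -> z <= f x.
  by move=> xst; rewrite leNgt; apply/negP => fxz; apply: none; exists x.
by rewrite pinv01_eq_s // pinv_f_dec_eq_s // (andP zab).2.
Qed.

Lemma pinv_f_dec_bot : pinv s t fd a = s.
Proof.
apply: pinv_eq => [|x xst|x]; [by rewrite lexx ltW | | lra].
by have /andP[le_afdx _] := f_dec_range xst; rewrite ltNge le_afdx.
Qed.

Lemma pinv_f_dec_top : pinv s t fd b = t.
Proof.
apply: pinv_eq => [|x /andP[_ ->] //|x]; first by rewrite lexx ltW.
exact: f_dec_lt_top.
Qed.

Lemma pinv_f_top z : b <= z <= f t -> pinv 0 1 f z = t.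
Proof.
move=> /andP[le_bz le_zft]; apply: pinv01_eq => // [|x x01 lt_xt].
  exact: in01_st.
by have := f_lt_below_t_of incr_f x01 lt_xt; lra.
Qed.

End Decomposition.

Section OrdinalSum.
Variables (R : realType) (A : Type) (a b : A -> R) (Fs : A -> R -> R -> R).
Variable F : R -> R -> R.
Hypothesis osF : is_ordinal_sum a b Fs F.

Lemma ordinal_sum_bounds al : 0 <= a al /\ a al < b al /\ b al <= 1.
Proof. by case: osF => _ [bounds _]. Qed.

Lemma ordinal_sum_index al be p q z : a al <= p -> q <= b al ->
  p < z < q -> a be < z < b be -> al = be.
Proof.
move=> le_ap le_qb /andP[lt_pz lt_zq] zbe; case: (pselect (al = be)) => // ne.
case: osF => _ [_ [disj _]]; case: (disj al be ne z); split=> //.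
by apply/andP; split; lra.
Qed.

Lemma ordinal_sum_min p q : in01 p -> in01 q ->
  (forall al, ~ (a al <= p <= b al /\ a al <= q <= b al)) -> F p q = Num.min p q.
Proof. by case: osF => _ [_ [_ [_ HF]]] p01 q01; apply: (HF p q p01 q01).2. Qed.

Lemma ordinal_sum_summand al p q : a al <= p <= b al -> a al <= q <= b al ->
  F p q = summand (a al) (b al) (Fs al) p q.
Proof.
move=> pal qal; have [ge0a [_ le_b1]] := ordinal_sum_bounds al.
have in01_al u : a al <= u <= b al -> in01 u.
  by case/andP=> le_au le_ub; apply/andP; split; lra.
by case: osF => _ [_ [_ [_ HF]]]; apply: (HF p q (in01_al p pal) (in01_al q qal)).1.
Qed.

Lemma ordinal_sumC p q : in01 p -> in01 q -> F p q = F q p.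
Proof.
move=> p01 q01.
have [[al [pal qal]]|none] := pselect (exists al, a al <= p <= b al /\ a al <= q <= b al).
  have [_ [lt_ab _]] := ordinal_sum_bounds al.
  have [_ [_ [_ [tn _]]]] := osF.
  rewrite (ordinal_sum_summand pal qal) (ordinal_sum_summand qal pal).
  by rewrite (summandC (tn al) lt_ab pal qal).
have {}none al : ~ (a al <= p <= b al /\ a al <= q <= b al).
  by move=> alpq; apply: none; exists al.
rewrite (ordinal_sum_min p01 q01 none) (ordinal_sum_min q01 p01) 1?minC // => al [? ?].
exact: (none al).
Qed.

Lemma ordinal_sum_apart be p q : in01 p -> in01 q -> p < q ->
  (exists2 z, p < z < q & a be < z < b be) -> ~ (a be <= p /\ q <= b be) ->
  F p q = p.
Proof.
move=> p01 q01 lt_pq [z zpq zbe] out; rewrite ordinal_sum_min //; first exact: min_l (ltW lt_pq).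
move=> al [/andP[le_ap _] /andP[_ le_qb]].
by apply: out; rewrite -(ordinal_sum_index le_ap le_qb zpq zbe).
Qed.

Lemma ordinal_sum_below be p q : in01 p -> in01 q -> p < a be < q -> F p q = p.
Proof.
move=> p01 q01 /andP[lt_pa lt_aq]; have [_ [lt_ab _]] := ordinal_sum_bounds be.
have zbe : exists2 z, p < z < q & a be < z < b be.
  have [le_qb|lt_bq] := lerP q (b be).
    by exists ((a be + q) / 2); apply/andP; split; lra.
  by exists ((a be + b be) / 2); apply/andP; split; lra.
apply: (ordinal_sum_apart p01 q01 _ zbe); first exact: lt_trans lt_aq.
by case=> le_ap _; lra.
Qed.

Lemma ordinal_sum_above be p q : in01 p -> in01 q -> p < b be < q -> F p q = p.
Proof.
move=> p01 q01 /andP[lt_pb lt_bq]; have [_ [lt_ab _]] := ordinal_sum_bounds be.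
have zbe : exists2 z, p < z < q & a be < z < b be.
  have [le_pa|lt_ap] := lerP p (a be).
    by exists ((a be + b be) / 2); apply/andP; split; lra.
  by exists ((p + b be) / 2); apply/andP; split; lra.
apply: (ordinal_sum_apart p01 q01 _ zbe); first exact: lt_trans lt_bq.
by case=> _ le_qb; lra.
Qed.

Lemma ordinal_sum_diag_above be u : in01 u -> b be < u -> b be <= F u u <= u.
Proof.
move=> u01 lt_bu.
have [[al ual]|none] := pselect (exists al, a al <= u <= b al); last first.
  by rewrite ordinal_sum_min ?minxx ?lexx ?(ltW lt_bu) // => al [ual _]; apply: none; exists al.
have [_ [lt_ab_al _]] := ordinal_sum_bounds al; have [_ [lt_ab_be _]] := ordinal_sum_bounds be.
have le_ba : b be <= a al.
  rewrite leNgt; apply/negP => lt_ab.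
  pose m := Num.max (a al) (a be).
  have [le_am le_bm lt_mb] : [/\ a al <= m, a be <= m & m < b be].
    by rewrite !le_max gt_max !lexx ?orbT lt_ab lt_ab_be.
  have /andP[_ le_ub] := ual.
  have eq_al : al = be.
    apply: (ordinal_sum_index (p := m) (q := b be) (z := (m + b be) / 2)) => //.
    - exact: le_trans (ltW lt_bu) le_ub.
    - by apply/andP; split; lra.
    - by apply/andP; split; lra.
  by move: le_ub; rewrite eq_al; lra.
have [_ [_ [_ [tn _]]]] := osF.
have /andP[le_aF le_Fu] := summand_diag (tn al) lt_ab_al ual.
by rewrite (ordinal_sum_summand ual ual) le_Fu (le_trans le_ba).
Qed.

End OrdinalSum.

Section Proposition.
Variables (R : realType) (A : Type) (a b : A -> R) (Fs : A -> R -> R -> R).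
Variables (F : R -> R -> R) (f : R -> R) (be : A).
Hypotheses (osF : is_ordinal_sum a b Fs F) (incr_f : strictly_incr01 f).
Local Notation s := (s_of f (a be)).
Local Notation t := (t_of f (b be)).
Local Notation fd := (f_dec f (a be) (b be)).
Hypothesis lt_st : s < t.

Let tnF : is_tnorm (Fs be). Proof. by case: osF => _ [_ [_ []]]. Qed.
Let lt_ab : a be < b be. Proof. by case: (ordinal_sum_bounds osF be) => _ []. Qed.

Local Notation T x y := (pinv 0 1 f (F (f x) (f y))).
Local Notation T_be x y := (pinv s t fd (summand (a be) (b be) (Fs be) (fd x) (fd y))).

Lemma pinv_ordinal_sum_bot x y : s <= x <= t -> s < y <= t -> f x < a be -> T x y = T_be x y.
Proof.
move=> xst /andP[lt_sy le_yt] lt_fxa; have yst : s <= y <= t by rewrite le_yt ltW.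
have [x01 y01] := (in01_st xst, in01_st yst).
have fx_a_fy : f x < a be < f y by rewrite lt_fxa (f_gt_above_s_of incr_f y01 lt_sy).
rewrite (ordinal_sum_below osF (incr_f.1 x x01) (incr_f.1 y y01) fx_a_fy) pinv_f_id //.
rewrite (f_dec_bot incr_f lt_st xst lt_fxa) (eq_s_of_f_lt incr_f xst lt_fxa).
by rewrite (summand_bot_l tnF lt_ab (f_dec_range incr_f lt_st yst)) pinv_f_dec_bot.
Qed.

Lemma pinv_ordinal_sum_mid x y : s <= x <= t -> s <= y <= t ->
  a be <= f x <= b be -> a be <= f y <= b be -> T x y = T_be x y.
Proof.
move=> xst yst fxab fyab; rewrite (ordinal_sum_summand osF fxab fyab).
rewrite !(f_dec_id incr_f lt_st) //.
exact/pinv_f_dec/(summand_range tnF lt_ab).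
Qed.

Lemma pinv_ordinal_sum_top x y : s <= x <= y -> y <= t -> a be <= f x -> b be < f y ->
  T x y = T_be x y.
Proof.
move=> /andP[le_sx le_xy] le_yt le_afx lt_bfy.
have xst : s <= x <= t by rewrite le_sx (le_trans le_xy).
have yst : s <= y <= t by rewrite le_yt (le_trans le_sx).
have [x01 y01] := (in01_st xst, in01_st yst).
have eq_yt := eq_t_of_f_gt incr_f yst lt_bfy.
rewrite (f_dec_top incr_f lt_st yst lt_bfy) (summand_top_r tnF lt_ab) ?f_dec_range //.
have [lt_bfx|le_fxb] := ltrP (b be) (f x).
  have eq_xt := eq_t_of_f_gt incr_f xst lt_bfx.
  rewrite (f_dec_top incr_f lt_st xst lt_bfx) pinv_f_dec_top //.
  apply: (pinv_f_top incr_f lt_st); rewrite eq_xt -eq_yt.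
  exact: (ordinal_sum_diag_above osF (incr_f.1 y y01) lt_bfy).
have lt_xt : x < t.
  rewrite lt_neqAle (andP xst).2 andbT; apply/eqP => eq_xt.
  by move: le_fxb; rewrite eq_xt -eq_yt leNgt lt_bfy.
have lt_fxb := f_lt_below_t_of incr_f x01 lt_xt.
have fx_b_fy : f x < b be < f y by rewrite lt_fxb lt_bfy.
have fxab : a be <= f x <= b be by rewrite le_afx ltW.
rewrite (ordinal_sum_above osF (incr_f.1 x x01) (incr_f.1 y y01) fx_b_fy).
by rewrite (f_dec_id incr_f lt_st xst fxab) (pinv_f_dec incr_f lt_st fxab).
Qed.

Lemma pinv_ordinal_sum_le x y : s <= x <= y -> y <= t -> ~ (x = s /\ y = s) ->
  T x y = T_be x y.
Proof.
move=> sxy le_yt not_ss; have /andP[le_sx le_xy] := sxy.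
have xst : s <= x <= t by rewrite le_sx (le_trans le_xy).
have yst : s <= y <= t by rewrite le_yt (le_trans le_sx).
have [lt_fxa|le_afx] := ltrP (f x) (a be).
  have eq_xs := eq_s_of_f_lt incr_f xst lt_fxa.
  have lt_sy : s < y.
    by rewrite lt_neqAle (andP yst).1 andbT; apply/eqP => eq_ys; apply: not_ss; rewrite -eq_ys.
  by apply: pinv_ordinal_sum_bot; rewrite ?lt_sy.
have [lt_bfy|le_fyb] := ltrP (b be) (f y); first exact: pinv_ordinal_sum_top.
have le_fxy := strictly_incr01_le incr_f (in01_st xst) (in01_st yst) le_xy.
apply: pinv_ordinal_sum_mid => //.
  by rewrite le_afx (le_trans le_fxy le_fyb).
by rewrite le_fyb (le_trans le_afx le_fxy).
Qed.

Lemma pinv_ordinal_sum x y : s <= x <= t -> s <= y <= t -> ~ (x = s /\ y = s) ->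
  T x y = T_be x y.
Proof.
move=> xst yst not_ss; have [/andP[le_sx le_xt] /andP[le_sy le_yt]] := (xst, yst).
have [le_xy|/ltW le_yx] := lerP x y; first by apply: pinv_ordinal_sum_le; rewrite ?le_sx.
have [fx01 fy01] := (incr_f.1 x (in01_st xst), incr_f.1 y (in01_st yst)).
rewrite (ordinal_sumC osF fx01 fy01).
rewrite (summandC tnF lt_ab (f_dec_range incr_f lt_st xst) (f_dec_range incr_f lt_st yst)).
by apply: pinv_ordinal_sum_le; rewrite ?le_sy // => -[? ?]; apply: not_ss.
Qed.

End Proposition.

Theorem proposition4p1 (R : realType) (A : Type) (a b : A -> R)
  (Fs : A -> R -> R -> R) (F : R -> R -> R) (f : R -> R) :
  is_ordinal_sum a b Fs F ->
  strictly_incr01 f ->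
  (exists be, s_of f (a be) < t_of f (b be)) ->
  forall be, s_of f (a be) < t_of f (b be) ->
  let s := s_of f (a be) in
  let t := t_of f (b be) in
  let fb := f_dec f (a be) (b be) in
  forall x y, s <= x <= t -> s <= y <= t -> ~ (x = s /\ y = s) ->
    pinv 0 1 f (F (f x) (f y)) =
    pinv s t fb (summand (a be) (b be) (Fs be) (fb x) (fb y)).
Proof. by move=> osF incr_f _ be lt_st /=; apply: pinv_ordinal_sum. Qed.
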